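(* Let $b\in\mathbb{R}$. If $b\ge\frac16$, then for all $x\in(0,1)$ \[ \frac{\pi}{2}\cdot\frac{(1-x)^{1/2}}{(1+x)^b}<\arccos x<2^{b+1/2}\cdot\frac{(1-x)^{1/2}}{(1+x)^b}. \tag{$*$} \] Moreover, the right-hand inequality in $( * )$ holds for all $x\in(0,1)$ if and only if $b\ge\frac16$. If $b\le\frac2\pi-\frac12$, then both inequalities in $( * )$ are reversed for all $x\in(0,1)$, i.e. $2^{b+1/2}\frac{(1-x)^{1/2}}{(1+x)^b}<\arccos x<\frac{\pi}{2}\frac{(1-x)^{1/2}}{(1+x)^b}$; and the reversed left-hand inequality $\arccos x<\frac{\pi}{2}\frac{(1-x)^{1/2}}{(1+x)^b}$ holds for all $x\in(0,1)$ if and only if $b\le\frac2\pi-\frac12$.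
   Context: $\arccos$ denotes the principal inverse cosine with values in $[0,\pi]$. *)

From Stdlib Require Import Reals.
Open Scope R_scope.

(* g b x = (1-x)^{1/2} / (1+x)^b, using Rpower for real exponents (bases > 0 on (0,1)). *)
Definition gfun (b x : R) : R := Rpower (1 - x) (1/2) / Rpower (1 + x) b.

(* Write x = cos (2u) with u = acos x / 2 in (0, π/4).  Then 1 - x = 2 sin² u and
   1 + x = 2 cos² u, and after taking logarithms every inequality of the theorem
   becomes a statement about
       h b u = ln (sin u) - ln u - 2 b ln (cos u):
   acos x < 2^(b+1/2) g_b(x) iff 0 < h b u, and π/2 g_b(x) < acos x iff
   h b u < h b (π/4) (equality at x = 0 corresponds to u = π/4); the reversed
   inequalities correspond to the reversed conditions.  Since h b u -> 0 as u -> 0+,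
   all of them follow once h b is strictly monotone on (0, π/4].  Its derivative
   h' b u = cot u - 1/u + 2 b tan u increases with b; it is positive for b = 1/6
   (a Taylor estimate of 2t + t cos t - 3 sin t) and negative for b = 2/π - 1/2
   (the scaled numerator vanishes at 0 and π/4 and changes monotonicity once,
   because tan u / u is increasing).  Sharpness: for b < 1/6 a second-order
   expansion gives h b u < 0 for small u, and for b > 2/π - 1/2 one has
   h' b (π/4) > 0, so h b u < h b (π/4) just left of π/4. *)

From Stdlib Require Import Reals Lra Psatz Factorial.
Open Scope R_scope.

Lemma Rpower_pos (a y : R) : 0 < Rpower a y.
Proof. unfold Rpower; apply exp_pos. Qed.

Lemma ln_div (a c : R) : 0 < a -> 0 < c -> ln (a / c) = ln a - ln c.
Proof.
  intros Ha Hc; unfold Rdiv.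
  rewrite ln_mult, ln_Rinv; [ring | lra | lra | apply Rinv_0_lt_compat; lra].
Qed.

Lemma ln_le_sub1 (y : R) : 0 < y -> ln y <= y - 1.
Proof. intros Hy; pose proof (exp_ineq1_le (ln y)); rewrite exp_ln in *; lra. Qed.

(* Applied at 1/y: ln y >= 1 - 1/y >= 1 - z whenever y z >= 1. *)
Lemma ln_ge_of_mul (y z : R) : 0 < y -> 1 <= y * z -> 1 - z <= ln y.
Proof.
  intros Hy Hyz.
  assert (Hinv : 0 < / y) by (apply Rinv_0_lt_compat; lra).
  pose proof (ln_le_sub1 _ Hinv) as Hl; rewrite ln_Rinv in Hl by lra.
  assert (y * / y = 1) by (field; lra).
  nra.
Qed.

Lemma lt_iff_ln_gap (p q : R) : 0 < p -> 0 < q -> (p < q <-> 0 < ln q - ln p).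
Proof.
  intros Hp Hq; split; intros Hlt.
  - pose proof (ln_increasing p q Hp Hlt); lra.
  - apply ln_lt_inv; lra.
Qed.

Lemma strict_incr_of_deriv_pos (f f' : R -> R) (a b : R) :
  a < b -> (forall c, a <= c <= b -> derivable_pt_lim f c (f' c)) ->
  (forall c, a < c < b -> 0 < f' c) -> f a < f b.
Proof.
  intros Hab Hder Hpos.
  destruct (MVT_cor2 f f' a b Hab Hder) as [c [Hmvt Hc]].
  pose proof (Hpos c Hc); nra.
Qed.

Lemma strict_decr_of_deriv_neg (f f' : R -> R) (a b : R) :
  a < b -> (forall c, a <= c <= b -> derivable_pt_lim f c (f' c)) ->
  (forall c, a < c < b -> f' c < 0) -> f b < f a.
Proof.
  intros Hab Hder Hneg.
  destruct (MVT_cor2 f f' a b Hab Hder) as [c [Hmvt Hc]].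
  pose proof (Hneg c Hc); nra.
Qed.

Lemma pos_of_incr_vanishing (f : R -> R) (a : R) :
  (forall p q, 0 < p -> p < q -> q <= a -> f p < f q) ->
  (forall e, 0 < e -> exists d, 0 < d /\ forall v, 0 < v < d -> Rabs (f v) < e) ->
  forall u, 0 < u <= a -> 0 < f u.
Proof.
  intros Hincr Hlim u Hu.
  destruct (Rlt_or_le 0 (f u)) as [Hpos | Hnonpos]; [exact Hpos | exfalso].
  assert (Hhalf : f (u / 2) < f u) by (apply Hincr; lra).
  destruct (Hlim (- f (u / 2))) as [d [Hd Hsmall]]; [lra |].
  set (v := Rmin (d / 2) (u / 4)).
  assert (Hv_d : v <= d / 2) by apply Rmin_l.
  assert (Hv_u : v <= u / 4) by apply Rmin_r.
  assert (Hv_pos : 0 < v) by (apply Rmin_glb_lt; lra).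
  assert (Hfv : f v < f (u / 2)) by (apply Hincr; lra).
  pose proof (Hsmall v ltac:(lra)) as Habs.
  pose proof (Rle_abs (- f v)) as Hle; rewrite Rabs_Ropp in Hle.
  lra.
Qed.

Lemma smaller_on_left (f : R -> R) (x l w : R) :
  derivable_pt_lim f x l -> 0 < l -> 0 < w -> exists u, x - w < u < x /\ f u < f x.
Proof.
  intros Hder Hl Hw.
  destruct (Hder l Hl) as [del Hdel].
  pose proof (cond_pos del) as Hdel_pos.
  set (k := Rmin (del / 2) (w / 2)).
  assert (Hk_del : k <= del / 2) by apply Rmin_l.
  assert (Hk_w : k <= w / 2) by apply Rmin_r.
  assert (Hk_pos : 0 < k) by (apply Rmin_glb_lt; lra).
  assert (Hquot : Rabs ((f (x + - k) - f x) / - k - l) < l).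
  { apply Hdel; [lra | rewrite Rabs_Ropp, Rabs_right; lra]. }
  apply Rabs_def2 in Hquot.
  exists (x - k); split; [lra |].
  assert (Hslope : 0 < (f (x + - k) - f x) / - k) by lra.
  replace (x - k) with (x + - k) by ring.
  assert (Heq : f (x + - k) - f x = - k * ((f (x + - k) - f x) / - k)) by (field; lra).
  nra.
Qed.

Lemma INR_fact_S (n : nat) : INR (fact (S n)) = INR (S n) * INR (fact n).
Proof. rewrite fact_simpl, mult_INR; reflexivity. Qed.

(* Unfolds a truncated Taylor sum of the standard library into explicit rational
   coefficients. *)
Ltac expand_taylor H :=
  cbn [sum_f_R0 Nat.mul Nat.add] in H; repeat rewrite INR_fact_S in H;
  cbn [fact INR pow] in H.

Lemma sin_bounds (t : R) : 0 <= t <= PI ->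
  t - t^3/6 + t^5/120 - t^7/5040 <= sin t <=
  t - t^3/6 + t^5/120 - t^7/5040 + t^9/362880.
Proof.
  intros Ht; destruct (SIN t) as [Hlb Hub]; try lra.
  unfold sin_lb, sin_ub, sin_approx, sin_term in *.
  expand_taylor Hlb; expand_taylor Hub.
  split; [eapply Rle_trans; [| exact Hlb] | eapply Rle_trans; [exact Hub |]];
    right; field.
Qed.

Lemma cos_bounds (t : R) : - PI / 2 <= t <= PI / 2 ->
  1 - t^2/2 + t^4/24 - t^6/720 <= cos t <=
  1 - t^2/2 + t^4/24 - t^6/720 + t^8/40320.
Proof.
  intros Ht; destruct (COS t) as [Hlb Hub]; try lra.
  unfold cos_lb, cos_ub, cos_approx, cos_term in *.
  expand_taylor Hlb; expand_taylor Hub.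
  split; [eapply Rle_trans; [| exact Hlb] | eapply Rle_trans; [exact Hub |]];
    right; field.
Qed.

Lemma trig_pos (u : R) : 0 < u < PI / 2 -> 0 < sin u /\ 0 < cos u.
Proof. intros Hu; split; [apply sin_gt_0 | apply cos_gt_0]; lra. Qed.

(* The inequality behind the threshold b = 1/6; its Taylor expansion starts with
   t^5 / 60. *)
Lemma trig_quintic_pos (t : R) : 0 < t < PI / 2 -> 0 < 2 * t + t * cos t - 3 * sin t.
Proof.
  intros Ht; pose proof PI_4.
  destruct (sin_bounds t) as [_ Hsin]; [lra |].
  destruct (cos_bounds t) as [Hcos _]; [lra |].
  assert (t * (1 - t^2/2 + t^4/24 - t^6/720) <= t * cos t)
    by (apply Rmult_le_compat_l; lra).
  assert (0 < t^5 * (1/60 - t^2/720 + 3 * t^2/5040 - 3 * t^4/362880)).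
  { apply Rmult_lt_0_compat; [apply pow_lt; lra |].
    assert (t^2 < 4) by nra; assert (t^4 < 16) by nra; nra. }
  nra.
Qed.

Lemma ln_sinc_bounds (v : R) : 0 < v <= 1/2 ->
  - v^2/3 <= ln (sin v / v) <= - v^2/6 + v^4/120.
Proof.
  intros Hv; pose proof PI2_1.
  destruct (sin_bounds v) as [Hlo Hhi]; [lra |].
  assert (Hv2 : v^2 <= 1/4) by nra.
  assert (0 <= v^5/120 - v^7/5040) by (assert (0 < v^5) by (apply pow_lt; lra); nra).
  assert (v^9/362880 <= v^7/5040) by (assert (0 < v^7) by (apply pow_lt; lra); nra).
  assert (Hsinc_lo : 1 - v^2/6 <= sin v / v).
  { apply Rmult_le_reg_r with v; [lra |]; unfold Rdiv; rewrite Rmult_assoc, Rinv_l; lra. }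
  assert (Hsinc_hi : sin v / v <= 1 - v^2/6 + v^4/120).
  { apply Rmult_le_reg_r with v; [lra |]; unfold Rdiv; rewrite Rmult_assoc, Rinv_l; lra. }
  split.
  - replace (- v^2/3) with (1 - (1 + v^2/3)) by field.
    apply ln_ge_of_mul; nra.
  - pose proof (ln_le_sub1 (sin v / v) ltac:(lra)); lra.
Qed.

Lemma ln_cos_bounds (v : R) : 0 < v <= 1/2 -> - (v^2/2 + v^4) <= ln (cos v) <= 0.
Proof.
  intros Hv; pose proof PI2_1.
  destruct (trig_pos v) as [_ Hc]; [lra |].
  destruct (cos_bounds v) as [Hlo _]; [lra |].
  assert (Hv2 : v^2 <= 1/4) by nra.
  assert (0 <= v^4/24 - v^6/720) by (assert (0 < v^4) by (apply pow_lt; lra); nra).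
  assert (cos v <= 1) by (pose proof (COS_bound v); lra).
  split.
  - replace (- (v^2/2 + v^4)) with (1 - (1 + v^2/2 + v^4)) by ring.
    apply ln_ge_of_mul; nra.
  - pose proof (ln_le_sub1 (cos v) Hc); lra.
Qed.

Definition hfun (b u : R) : R := ln (sin u) - ln u - 2 * b * ln (cos u).

Definition hder (b u : R) : R := cos u / sin u - / u + 2 * b * (sin u / cos u).

Lemma hfun_deriv (b u : R) : 0 < u < PI / 2 -> derivable_pt_lim (hfun b) u (hder b u).
Proof.
  intros Hu; destruct (trig_pos u Hu) as [Hs Hc].
  assert (Hd := derivable_pt_lim_minus _ _ u _ _
    (derivable_pt_lim_minus _ _ u _ _
      (derivable_pt_lim_comp _ _ u _ _ (derivable_pt_lim_sin u) (derivable_pt_lim_ln _ Hs))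
      (derivable_pt_lim_ln u ltac:(lra)))
    (derivable_pt_lim_scal _ (2 * b) u _
      (derivable_pt_lim_comp _ _ u _ _ (derivable_pt_lim_cos u) (derivable_pt_lim_ln _ Hc)))).
  replace (hder b u) with (/ sin u * cos u - / u - 2 * b * (/ cos u * - sin u))
    by (unfold hder; field; lra).
  exact Hd.
Qed.

(* Clearing denominators: the sign of hder b u is that of this numerator. *)
Lemma hder_scaled (b u : R) : 0 < u < PI / 2 ->
  hder b u * (u * sin u * cos u) =
  u * cos u * cos u - sin u * cos u + 2 * b * (u * sin u * sin u).
Proof. intros Hu; destruct (trig_pos u Hu); unfold hder; field; lra. Qed.

(* Since tan u > 0, h' b u is nondecreasing in b: thresholds need only be checked
   at their endpoints. *)
Lemma hder_mono_b (b b' u : R) : b <= b' -> 0 < u < PI / 2 -> hder b u <= hder b' u.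
Proof.
  intros Hbb Hu; destruct (trig_pos u Hu) as [Hs Hc].
  assert (0 < sin u / cos u) by (apply Rdiv_lt_0_compat; lra).
  unfold hder; nra.
Qed.

(* sin (π/4) = cos (π/4) = 1/√2. *)
Lemma ln_inv_sqrt2 : ln (1 / sqrt 2) = - ln 2 / 2.
Proof.
  assert (Hs : 0 < sqrt 2) by (apply sqrt_lt_R0; lra).
  assert (Hln2 : ln 2 = 2 * ln (sqrt 2))
    by (rewrite <- (sqrt_sqrt 2) at 1 by lra; rewrite ln_mult; lra).
  rewrite ln_div, ln_1; lra.
Qed.

Lemma hfun_PI4 (b : R) : hfun b (PI / 4) = ln 2 / 2 - ln (PI / 2) + b * ln 2.
Proof.
  pose proof PI_RGT_0.
  unfold hfun; rewrite sin_PI4, cos_PI4, ln_inv_sqrt2.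
  replace (PI / 4) with ((PI / 2) / 2) by field.
  rewrite ln_div; lra.
Qed.

Lemma hder_PI4 (b : R) : hder b (PI / 4) = 1 - 4 / PI + 2 * b.
Proof.
  pose proof PI_RGT_0.
  assert (0 < sqrt 2) by (apply sqrt_lt_R0; lra).
  unfold hder; rewrite sin_PI4, cos_PI4; field; lra.
Qed.

(* Near 0, h splits into ln (sin v / v), of order v^2, and the cosine term. *)
Lemma hfun_split (b v : R) : 0 < v < PI / 2 ->
  hfun b v = ln (sin v / v) - 2 * b * ln (cos v).
Proof. intros Hv; destruct (trig_pos v Hv); unfold hfun; rewrite ln_div; lra. Qed.

Lemma hfun_abs_bound (b v : R) : 0 < v <= 1/2 -> Rabs (hfun b v) <= (1/3 + 2 * Rabs b) * v^2.
Proof.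
  intros Hv; pose proof PI2_1.
  destruct (ln_sinc_bounds v Hv) as [Hsinc_lo Hsinc_hi].
  destruct (ln_cos_bounds v Hv) as [Hcos_lo Hcos_hi].
  assert (Hv4 : v^4 <= v^2/4)
    by (replace (v^4) with (v^2 * v^2) by ring; assert (v^2 <= 1/4) by nra; nra).
  rewrite hfun_split by lra; apply Rabs_le.
  pose proof (Rle_abs b); pose proof (Rle_abs (- b)); rewrite Rabs_Ropp in *.
  split; nra.
Qed.

(* The leading term of h b near 0 is (b - 1/6) v^2 (for b >= 0). *)
Lemma hfun_upper_bound (b v : R) : 0 < v <= 1/2 ->
  hfun b v <= (Rmax b 0 - 1/6) * v^2 + (1/120 + 2 * Rmax b 0) * v^4.
Proof.
  intros Hv; pose proof PI2_1.
  destruct (ln_sinc_bounds v Hv) as [_ Hsinc].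
  destruct (ln_cos_bounds v Hv) as [Hcos_lo Hcos_hi].
  rewrite hfun_split by lra.
  destruct (Rle_or_lt 0 b) as [Hb | Hb];
    [rewrite Rmax_left by lra | rewrite Rmax_right by lra]; nra.
Qed.

Lemma hfun_tends_0 (b : R) :
  forall e, 0 < e -> exists d, 0 < d /\ forall v, 0 < v < d -> Rabs (hfun b v) < e.
Proof.
  intros e He.
  set (K := 1/3 + 2 * Rabs b).
  assert (HK : 0 < K) by (unfold K; pose proof (Rabs_pos b); lra).
  set (s := sqrt (e / K)).
  assert (Hs : 0 < s) by (apply sqrt_lt_R0, Rdiv_lt_0_compat; lra).
  assert (Hss : K * (s * s) = e).
  { unfold s; rewrite sqrt_sqrt; [field; lra | apply Rlt_le, Rdiv_lt_0_compat; lra]. }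
  exists (Rmin (1/2) s); split; [apply Rmin_glb_lt; lra |].
  intros v Hv.
  assert (Hv_half : v <= 1/2) by (pose proof (Rmin_l (1/2) s); lra).
  assert (Hv_s : v < s) by (pose proof (Rmin_r (1/2) s); lra).
  eapply Rle_lt_trans; [apply hfun_abs_bound; lra |]; fold K.
  assert (v^2 < s * s) by nra.
  nra.
Qed.

Lemma hfun_profile_incr (b : R) :
  (forall c, 0 < c < PI / 4 -> 0 < hder b c) ->
  forall u, 0 < u < PI / 4 -> 0 < hfun b u /\ hfun b u < hfun b (PI / 4).
Proof.
  intros Hpos u Hu; pose proof PI_RGT_0.
  assert (Hincr : forall p q, 0 < p -> p < q -> q <= PI / 4 -> hfun b p < hfun b q).
  { intros p q Hp Hpq Hq.
    apply (strict_incr_of_deriv_pos _ (hder b)); [lra | | ].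
    - intros c Hc; apply hfun_deriv; lra.
    - intros c Hc; apply Hpos; lra. }
  split.
  - apply (pos_of_incr_vanishing _ (PI / 4) Hincr (hfun_tends_0 b)); lra.
  - apply Hincr; lra.
Qed.

Lemma hfun_profile_decr (b : R) :
  (forall c, 0 < c < PI / 4 -> hder b c < 0) ->
  forall u, 0 < u < PI / 4 -> hfun b u < 0 /\ hfun b (PI / 4) < hfun b u.
Proof.
  intros Hneg u Hu; pose proof PI_RGT_0.
  assert (Hdecr : forall p q, 0 < p -> p < q -> q <= PI / 4 -> hfun b q < hfun b p).
  { intros p q Hp Hpq Hq.
    apply (strict_decr_of_deriv_neg _ (hder b)); [lra | | ].
    - intros c Hc; apply hfun_deriv; lra.
    - intros c Hc; apply Hneg; lra. }
  split.
  - enough (0 < - hfun b u) by lra.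
    apply (pos_of_incr_vanishing (fun v => - hfun b v) (PI / 4)); [| | lra].
    + intros p q Hp Hpq Hq; pose proof (Hdecr p q Hp Hpq Hq); lra.
    + intros e He; destruct (hfun_tends_0 b e He) as [d [Hd Hsmall]].
      exists d; split; [exact Hd |]; intros v Hv; rewrite Rabs_Ropp; auto.
  - apply Hdecr; lra.
Qed.

Lemma acos_half_range (x : R) : 0 < x < 1 -> 0 < acos x / 2 < PI / 4.
Proof.
  intros Hx.
  pose proof (acos_bound_lt x ltac:(lra)).
  pose proof (cos_acos x ltac:(lra)).
  destruct (Rlt_or_le (acos x) (PI / 2)); [lra |].
  pose proof (cos_le_0 (acos x) ltac:(lra) ltac:(lra)); lra.
Qed.

(* With u = acos x / 2 we have x = cos (2u), so 1 - x = 2 sin² u, 1 + x = 2 cos² u. *)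
Lemma half_angle_forms (x : R) : 0 < x < 1 ->
  1 - x = 2 * sin (acos x / 2) ^ 2 /\ 1 + x = 2 * cos (acos x / 2) ^ 2.
Proof.
  intros Hx.
  assert (Hx_cos : x = cos (2 * (acos x / 2)))
    by (replace (2 * (acos x / 2)) with (acos x) by field; rewrite cos_acos; lra).
  split; [rewrite Hx_cos at 1; rewrite cos_2a_sin | rewrite Hx_cos at 1; rewrite cos_2a_cos];
    ring.
Qed.

Lemma log_gaps (b x : R) : 0 < x < 1 ->
  ln (Rpower 2 (b + 1/2) * gfun b x) - ln (acos x) = hfun b (acos x / 2) /\
  ln (acos x) - ln (PI / 2 * gfun b x) = hfun b (PI / 4) - hfun b (acos x / 2).
Proof.
  intros Hx; pose proof PI_RGT_0.
  pose proof (acos_half_range x Hx) as Hu.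
  destruct (half_angle_forms x Hx) as [Hminus Hplus].
  set (u := acos x / 2) in *.
  destruct (trig_pos u) as [Hs Hc]; [lra |].
  assert (Hg_pos : 0 < gfun b x) by (apply Rdiv_lt_0_compat; apply Rpower_pos).
  assert (Hln_g : ln (gfun b x) = (ln 2 + 2 * ln (sin u)) / 2 - b * (ln 2 + 2 * ln (cos u))).
  { unfold gfun; rewrite ln_div by apply Rpower_pos.
    rewrite !ln_Rpower, Hminus, Hplus, !ln_mult, !ln_pow by (try apply pow_lt; lra).
    simpl INR; field. }
  assert (Hln_acos : ln (acos x) = ln 2 + ln u)
    by (replace (acos x) with (2 * u) by (unfold u; field); apply ln_mult; lra).
  rewrite hfun_PI4; unfold hfun.
  rewrite !ln_mult, ln_Rpower, Hln_g, Hln_acos by (try apply Rpower_pos; lra).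
  split; field.
Qed.

Lemma bounds_iff_hfun (b x : R) : 0 < x < 1 ->
  (acos x < Rpower 2 (b + 1/2) * gfun b x <-> 0 < hfun b (acos x / 2)) /\
  (Rpower 2 (b + 1/2) * gfun b x < acos x <-> hfun b (acos x / 2) < 0) /\
  (PI / 2 * gfun b x < acos x <-> hfun b (acos x / 2) < hfun b (PI / 4)) /\
  (acos x < PI / 2 * gfun b x <-> hfun b (PI / 4) < hfun b (acos x / 2)).
Proof.
  intros Hx; pose proof PI_RGT_0.
  pose proof (acos_half_range x Hx).
  assert (Hg : 0 < gfun b x) by (apply Rdiv_lt_0_compat; apply Rpower_pos).
  assert (Hupper : 0 < Rpower 2 (b + 1/2) * gfun b x)
    by (apply Rmult_lt_0_compat; [apply Rpower_pos | exact Hg]).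
  assert (Hlower : 0 < PI / 2 * gfun b x) by (apply Rmult_lt_0_compat; lra).
  assert (Hacos : 0 < acos x) by lra.
  destruct (log_gaps b x Hx) as [Hgap_up Hgap_low].
  repeat split; intros Hlt.
  all: first [ apply lt_iff_ln_gap in Hlt; lra | apply lt_iff_ln_gap; lra ].
Qed.

Lemma acos_cos_double (u : R) : 0 < u < PI / 4 ->
  0 < cos (2 * u) < 1 /\ acos (cos (2 * u)) / 2 = u.
Proof.
  intros Hu; pose proof PI_RGT_0.
  destruct (trig_pos u) as [Hs _]; [lra |].
  split; [split |].
  - apply cos_gt_0; lra.
  - rewrite cos_2a_sin; nra.
  - rewrite acos_cos; lra.
Qed.

(* At b = 1/6 the scaled derivative is (2t + t cos t - 3 sin t)/6 with t = 2u. *)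
Lemma hder_one_sixth_pos (u : R) : 0 < u < PI / 4 -> 0 < hder (1/6) u.
Proof.
  intros Hu; pose proof PI_RGT_0.
  destruct (trig_pos u) as [Hs Hc]; [lra |].
  pose proof (trig_quintic_pos (2 * u) ltac:(lra)) as Hq.
  rewrite sin_2a, cos_2a in Hq.
  pose proof (sin2_cos2 u) as Hpyth; unfold Rsqr in Hpyth.
  pose proof (hder_scaled (1/6) u ltac:(lra)) as Hscaled.
  assert (0 < u * sin u * cos u) by (apply Rmult_lt_0_compat; nra).
  nra.
Qed.

Definition tan_ratio (s : R) : R := sin s / (s * cos s).

Lemma tan_ratio_incr (s1 s2 : R) : 0 < s1 -> s1 < s2 -> s2 < PI / 2 ->
  tan_ratio s1 < tan_ratio s2.
Proof.
  intros H1 H12 H2.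
  apply (strict_incr_of_deriv_pos _ (fun s => (s - sin s * cos s) / (s * cos s) ^ 2));
    [lra | intros c Hc | intros c Hc].
  - destruct (trig_pos c) as [Hs Hcos]; [lra |].
    assert (Hd := derivable_pt_lim_div _ _ c _ _ (derivable_pt_lim_sin c)
      (derivable_pt_lim_mult _ _ c _ _ (derivable_pt_lim_id c) (derivable_pt_lim_cos c))
      ltac:(unfold mult_fct, id; nra)).
    unfold mult_fct, id in Hd.
    pose proof (sin2_cos2 c) as Hpyth; unfold Rsqr in Hpyth.
    match type of Hd with derivable_pt_lim _ _ ?l =>
      replace ((c - sin c * cos c) / (c * cos c) ^ 2) with l; [exact Hd |] end.
    replace (c - sin c * cos c)
      with (c * (sin c * sin c + cos c * cos c) - sin c * cos c) by (rewrite Hpyth; ring).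
    unfold Rsqr; field; lra.
  - (* c - sin c cos c = (2c - sin 2c) / 2 > 0. *)
    destruct (trig_pos c) as [Hs Hcos]; [lra |].
    pose proof (sin_lt_x (2 * c) ltac:(lra)) as Hsin2; rewrite sin_2a in Hsin2.
    apply Rdiv_lt_0_compat; [lra | apply pow_lt; nra].
Qed.

(* The numerator of hder (2/π - 1/2) u after clearing denominators (see hder_scaled),
   and its derivative. *)
Definition crit_num (u : R) : R :=
  u * cos u * cos u - sin u * cos u + (4 / PI - 1) * (u * sin u * sin u).

Definition crit_num' (u : R) : R :=
  4 / PI * sin u * sin u - (4 - 8 / PI) * u * sin u * cos u.

Lemma crit_num_deriv (u : R) : derivable_pt_lim crit_num u (crit_num' u).
Proof.
  pose proof PI_RGT_0.
  assert (Hd := derivable_pt_lim_plus _ _ u _ _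
    (derivable_pt_lim_minus _ _ u _ _
      (derivable_pt_lim_mult _ _ u _ _
        (derivable_pt_lim_mult _ _ u _ _ (derivable_pt_lim_id u) (derivable_pt_lim_cos u))
        (derivable_pt_lim_cos u))
      (derivable_pt_lim_mult _ _ u _ _ (derivable_pt_lim_sin u) (derivable_pt_lim_cos u)))
    (derivable_pt_lim_scal _ (4 / PI - 1) u _
      (derivable_pt_lim_mult _ _ u _ _
        (derivable_pt_lim_mult _ _ u _ _ (derivable_pt_lim_id u) (derivable_pt_lim_sin u))
        (derivable_pt_lim_sin u)))).
  unfold mult_fct, id in Hd.
  match type of Hd with derivable_pt_lim _ _ ?l =>
    replace (crit_num' u) with l; [exact Hd |] end.
  unfold crit_num'.
  field; lra.
Qed.

(* crit_num decreases while tan u / u < π - 2 and increases afterwards. *)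
Lemma crit_num'_factor (u : R) : 0 < u < PI / 2 ->
  crit_num' u = 4 / PI * (u * sin u * cos u) * (tan_ratio u - (PI - 2)).
Proof.
  intros Hu; pose proof PI_RGT_0; destruct (trig_pos u Hu).
  unfold crit_num', tan_ratio; field; lra.
Qed.

Lemma crit_num_ends : crit_num 0 = 0 /\ crit_num (PI / 4) = 0.
Proof.
  pose proof PI_RGT_0.
  assert (0 < sqrt 2) by (apply sqrt_lt_R0; lra).
  pose proof (sqrt_sqrt 2 ltac:(lra)).
  unfold crit_num; rewrite sin_0, sin_PI4, cos_PI4; split; [ring | field_simplify; lra].
Qed.

(* Hence crit_num < 0 on (0, π/4): compare with the end on the monotone side. *)
Lemma crit_num_neg (u : R) : 0 < u < PI / 4 -> crit_num u < 0.
Proof.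
  intros Hu; pose proof PI_RGT_0.
  destruct crit_num_ends as [Hzero Hquarter].
  assert (Hsign : forall c, 0 < c < PI / 2 ->
    (tan_ratio c < PI - 2 -> crit_num' c < 0) /\ (PI - 2 < tan_ratio c -> 0 < crit_num' c)).
  { intros c Hc; destruct (trig_pos c Hc) as [Hs Hcos].
    rewrite (crit_num'_factor c Hc).
    assert (0 < 4 / PI * (c * sin c * cos c)).
    { apply Rmult_lt_0_compat; [apply Rdiv_lt_0_compat; lra |].
      apply Rmult_lt_0_compat; [apply Rmult_lt_0_compat |]; lra. }
    split; intros; nra. }
  destruct (Rle_or_lt (tan_ratio u) (PI - 2)) as [Hsmall | Hlarge].
  - rewrite <- Hzero.
    apply (strict_decr_of_deriv_neg _ crit_num'); [lra | intros; apply crit_num_deriv |].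
    intros c Hc; apply Hsign; [lra |].
    pose proof (tan_ratio_incr c u ltac:(lra) ltac:(lra) ltac:(lra)); lra.
  - rewrite <- Hquarter.
    apply (strict_incr_of_deriv_pos _ crit_num'); [lra | intros; apply crit_num_deriv |].
    intros c Hc; apply Hsign; [lra |].
    pose proof (tan_ratio_incr u c ltac:(lra) ltac:(lra) ltac:(lra)); lra.
Qed.

Lemma hder_critical_neg (u : R) : 0 < u < PI / 4 -> hder (2 / PI - 1/2) u < 0.
Proof.
  intros Hu; pose proof PI_RGT_0.
  destruct (trig_pos u) as [Hs Hc]; [lra |].
  pose proof (crit_num_neg u Hu) as Hneg.
  pose proof (hder_scaled (2 / PI - 1/2) u ltac:(lra)) as Hscaled.
  replace (2 * (2 / PI - 1/2)) with (4 / PI - 1) in Hscaled by (field; lra).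
  fold (crit_num u) in Hscaled.
  assert (0 < u * sin u * cos u) by (apply Rmult_lt_0_compat; nra).
  nra.
Qed.

Lemma hder_pos_above (b u : R) : b >= 1/6 -> 0 < u < PI / 4 -> 0 < hder b u.
Proof.
  intros Hb Hu; pose proof PI_RGT_0.
  pose proof (hder_one_sixth_pos u Hu); pose proof (hder_mono_b (1/6) b u ltac:(lra) ltac:(lra)).
  lra.
Qed.

Lemma hder_neg_below (b u : R) : b <= 2 / PI - 1/2 -> 0 < u < PI / 4 -> hder b u < 0.
Proof.
  intros Hb Hu; pose proof PI_RGT_0.
  pose proof (hder_critical_neg u Hu); pose proof (hder_mono_b b (2 / PI - 1/2) u Hb ltac:(lra)).
  lra.
Qed.

(* For b < 1/6 the right-hand bound fails near x = 1 (u near 0). *)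
Lemma hfun_neg_somewhere (b : R) : b < 1/6 -> exists u, 0 < u < PI / 4 /\ hfun b u < 0.
Proof.
  intros Hb; pose proof PI2_1.
  set (m := Rmax b 0).
  assert (Hm : 0 <= m < 1/6) by (unfold m; destruct (Rle_or_lt 0 b);
    [rewrite Rmax_left | rewrite Rmax_right]; lra).
  (* Choose v with v^2 = 1/6 - m, where the bound of hfun_upper_bound is negative. *)
  set (v := sqrt (1/6 - m)).
  assert (Hv : 0 < v) by (apply sqrt_lt_R0; lra).
  assert (Hvv : v * v = 1/6 - m) by (apply sqrt_sqrt; lra).
  assert (Hv_half : v <= 1/2) by nra.
  exists v; split; [lra |].
  eapply Rle_lt_trans; [apply hfun_upper_bound; lra |]; fold m.
  replace ((m - 1/6) * v^2 + (1/120 + 2 * m) * v^4)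
    with ((v * v) * (v * v) * (2 * m - 119/120))
    by (replace (m - 1/6) with (- (v * v)) by lra; field).
  assert (0 < v * v * (v * v)) by (apply Rmult_lt_0_compat; nra).
  nra.
Qed.

(* For b > 2/π - 1/2 the reversed left-hand bound fails near x = 0 (u near π/4). *)
Lemma hfun_below_PI4_somewhere (b : R) : b > 2 / PI - 1/2 ->
  exists u, 0 < u < PI / 4 /\ hfun b u < hfun b (PI / 4).
Proof.
  intros Hb; pose proof PI_RGT_0.
  assert (Hslope : 0 < hder b (PI / 4)) by (rewrite hder_PI4; lra).
  destruct (smaller_on_left (hfun b) (PI / 4) _ (PI / 4)
              (hfun_deriv b (PI / 4) ltac:(lra)) Hslope ltac:(lra)) as [u [Hu Hlt]].
  exists u; split; [lra | exact Hlt].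
Qed.

Theorem theorem2 :
  (forall b : R, b >= 1/6 -> forall x : R, 0 < x < 1 ->
     PI / 2 * gfun b x < acos x /\ acos x < Rpower 2 (b + 1/2) * gfun b x) /\
  (forall b : R,
     (forall x : R, 0 < x < 1 -> acos x < Rpower 2 (b + 1/2) * gfun b x) <-> b >= 1/6) /\
  (forall b : R, b <= 2 / PI - 1/2 -> forall x : R, 0 < x < 1 ->
     Rpower 2 (b + 1/2) * gfun b x < acos x /\ acos x < PI / 2 * gfun b x) /\
  (forall b : R,
     (forall x : R, 0 < x < 1 -> acos x < PI / 2 * gfun b x) <-> b <= 2 / PI - 1/2).
Proof.
  assert (Habove : forall b, b >= 1/6 -> forall x, 0 < x < 1 ->
     PI / 2 * gfun b x < acos x /\ acos x < Rpower 2 (b + 1/2) * gfun b x).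
  { intros b Hb x Hx; destruct (bounds_iff_hfun b x Hx) as (Hup & _ & Hlow & _).
    destruct (hfun_profile_incr b (fun c => hder_pos_above b c Hb) _ (acos_half_range x Hx)).
    rewrite Hup, Hlow; tauto. }
  assert (Hbelow : forall b, b <= 2 / PI - 1/2 -> forall x, 0 < x < 1 ->
     Rpower 2 (b + 1/2) * gfun b x < acos x /\ acos x < PI / 2 * gfun b x).
  { intros b Hb x Hx; destruct (bounds_iff_hfun b x Hx) as (_ & Hup & _ & Hlow).
    destruct (hfun_profile_decr b (fun c => hder_neg_below b c Hb) _ (acos_half_range x Hx)).
    rewrite Hup, Hlow; tauto. }
  split; [exact Habove |]; split; [| split; [exact Hbelow |]].
  - intros b; split; [intros Hall | intros Hb x Hx; apply Habove; assumption].
    destruct (Rlt_or_le b (1/6)) as [Hb | Hb]; [exfalso | lra].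
    destruct (hfun_neg_somewhere b Hb) as [u [Hu Hneg]].
    destruct (acos_cos_double u Hu) as [Hx Hux].
    destruct (bounds_iff_hfun b _ Hx) as (Hup & _); rewrite Hux in Hup.
    apply Hup in Hall; [lra | exact Hx].
  - intros b; split; [intros Hall | intros Hb x Hx; apply Hbelow; assumption].
    destruct (Rle_or_lt b (2 / PI - 1/2)) as [Hb | Hb]; [exact Hb | exfalso].
    destruct (hfun_below_PI4_somewhere b Hb) as [u [Hu Hlt]].
    destruct (acos_cos_double u Hu) as [Hx Hux].
    destruct (bounds_iff_hfun b _ Hx) as (_ & _ & _ & Hlow); rewrite Hux in Hlow.
    apply Hlow in Hall; [lra | exact Hx].
Qed.
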